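(* Let $\mathcal{H}$ be a real Hilbert space, $T\ge1$ an integer (known to the player), $G>0$, $\mathcal{G}=\{g\in\mathcal{H}:\|g\|\le G\}$, $\epsilon>0$, and $a>G^2\pi/2$. Consider the strategy that, for $t=0,\dots,T-1$, plays \[ w_{t+1}=\epsilon\,\hat\theta_t\,\frac{\exp\Big(\frac{(\|\theta_t\|+G)^2}{2aT-\pi G^2(T-t-1)}\Big)-\exp\Big(\frac{(\|\theta_t\|-G)^2}{2aT-\pi G^2(T-t-1)}\Big)}{2G\sqrt{1-\frac{\pi G^2(T-t-1)}{2aT}}}. \] Then for any sequence of linear costs $g_1,\dots,g_T\in\mathcal{G}$ and any $u\in\mathcal{H}$, \[ \operatorname{Regret}(u)\ \le\ \|u\|\sqrt{2aT\log\Big(\frac{\sqrt{aT}\,\|u\|}{\epsilon}+1\Big)}+\epsilon\Big(\Big(1-\frac{\pi G^2}{2a}\Big)^{-1/2}-1\Big). \]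
   Context: Online linear optimization: on rounds $t=1,\dots,T$ the player chooses $w_t\in\mathcal{H}$, the adversary chooses $g_t\in\mathcal{G}$, the player suffers loss $\langle w_t,g_t\rangle$. $\theta_t=-\sum_{s=1}^t g_s$ ($\theta_0=0$); $\hat\theta=\theta/\|\theta\|$ if $\theta\ne0$ and $\hat\theta=0$ otherwise. $\operatorname{Regret}(u)=\sum_{t=1}^T\langle g_t,w_t-u\rangle$. *)

From HB Require Import structures.
From mathcomp Require Import all_boot all_order all_algebra.
From mathcomp Require Import all_classical all_reals all_analysis.
Set Implicit Arguments. Unset Strict Implicit. Unset Printing Implicit Defensive.
Import Order.TTheory GRing.Theory Num.Theory.
Local Open Scope ring_scope.

Section Defs.
Variables (R : realType) (V : lmodType R) (ip : V -> V -> R).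

Definition is_inner_product : Prop :=
  [/\ forall x y, ip x y = ip y x,
      forall a x y z, ip (a *: x + y) z = a * ip x z + ip y z,
      forall x, 0 <= ip x x
    & forall x, ip x x = 0 -> x = 0].

Definition ipnorm (x : V) : R := Num.sqrt (ip x x).

Definition ip_complete : Prop :=
  forall u : nat -> V,
    (forall e : R, 0 < e -> exists N : nat, forall m n : nat,
        (N <= m)%N -> (N <= n)%N -> ipnorm (u m - u n) < e) ->
    exists l : V, forall e : R, 0 < e -> exists N : nat, forall n : nat,
        (N <= n)%N -> ipnorm (u n - l) < e.

Definition is_hilbert : Prop := is_inner_product /\ ip_complete.

(* theta_t = - sum_{s=1}^t g_s  (rounds indexed from 1; theta_0 = 0) *)
Definition theta (g : nat -> V) (t : nat) : V := - \sum_(1 <= s < t.+1) g s.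

Definition hat (th : V) : V :=
  if ipnorm th == 0 then 0 else (ipnorm th)^-1 *: th.

(* The strategy: w_{t+1} from theta_t, for t = 0, ..., T-1.
   player_w ... g t.+1 is w_{t+1}. *)
Definition player_w (T : nat) (G a eps : R) (g : nat -> V) (t1 : nat) : V :=
  let t := t1.-1 in
  let th := theta g t in
  let D := 2 * a * T%:R - pi * G ^+ 2 * (T%:R - t%:R - 1) in
  (eps * ((expR ((ipnorm th + G) ^+ 2 / D) - expR ((ipnorm th - G) ^+ 2 / D))
          / (2 * G * Num.sqrt (1 - pi * G ^+ 2 * (T%:R - t%:R - 1) / (2 * a * T%:R)))))
      *: hat th.

Definition regret (T : nat) (g w : nat -> V) (u : V) : R :=
  \sum_(1 <= t < T.+1) ip (g t) (w t - u).

End Defs.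

(* The strategy plays the discrete gradient, in the direction of theta_t, of the potential
     Phi_s(x) = eps * exp (x^2 / (2aT - pi G^2 s)) / sqrt (1 - pi G^2 s / (2aT))
   at x = |theta_t|, where s = T - t - 1 rounds remain.  Convexity of exp bounds
   Phi_s(|theta - g|) + <g, w> by the average of Phi_s(|theta| + G) and Phi_s(|theta| - G),
   and cosh y <= exp (y^2 / 2) bounds that average by Phi_{s+1}(|theta|) because pi >= 2.
   Telescoping gives sum_t <g_t, w_t> <= Phi_T(0) - Phi_0(|theta_T|), and the term
   <theta_T, u> - Phi_0(|theta_T|) is bounded by maximizing |u| x - eps exp (x^2 / (2aT))
   over x >= 0, up to the tangent-line estimate exp y >= 1 + y. *)

From HB Require Import structures.
From mathcomp Require Import all_boot all_order all_algebra.
From mathcomp Require Import all_classical all_reals all_analysis.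
From mathcomp Require Import ring lra.
Import Order.TTheory GRing.Theory Num.Theory numFieldNormedType.Exports.
Local Open Scope ring_scope.
Set Implicit Arguments.
Unset Strict Implicit.

Section RealInequalities.
Context {R : realType}.
Implicit Types (x y : R).

Lemma is_derive_ge0_le (f df : R -> R) :
  (forall x, is_derive x 1 f (df x)) -> (forall x, 0 <= x -> 0 <= df x) ->
  forall y, 0 <= y -> f 0 <= f y.
Proof.
move=> fd df_ge0 y y0; rewrite -subr_ge0.
have [|c c0y ->] := MVT_segment y0 (fun x _ => fd x).
  apply/continuous_subspaceT => x.
  by apply/differentiable_continuous/derivable1_diffP; case: (fd x).
rewrite mulr_ge0 ?subr0 // df_ge0 //.
by move: c0y; rewrite in_itv /= => /andP[].
Qed.

Lemma convex_expR_comb (l x y : R) : 0 <= l -> l <= 1 ->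
  expR (l * x + (1 - l) * y) <= l * expR x + (1 - l) * expR y.
Proof. by move=> l0 l1; have := convex_expR (Itv01 l0 l1) x y; rewrite !convRE. Qed.

Lemma expR_mul1B_le_expRN_mul1D x : 0 <= x -> (1 - x) * expR x <= (1 + x) * expR (- x).
Proof.
move=> x0; rewrite -subr_ge0.
pose k y := (1 + y) * expR (- y) - (1 - y) * expR y.
have <- : k 0 = 0 by rewrite /k oppr0 expR0; lra.
apply: (@is_derive_ge0_le k (fun y => y * (expR y - expR (- y))) _ _ x x0) => [y|y y0].
  have -> : k = (fun z : R => 1 + z) * (expR \o -%R) - (fun z : R => 1 - z) * expR.
    by apply/funext.
  by apply: is_derive_eq; rewrite /GRing.scale /=; ring.
by rewrite mulr_ge0 // subr_ge0 ler_expR; lra.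
Qed.

Lemma cosh_le_expR_sqr_half x : expR x + expR (- x) <= 2 * expR (x ^+ 2 / 2).
Proof.
wlog x0 : x / 0 <= x.
  move=> H; have [/H //|/ltW x0] := leP 0 x.
  by have := H (- x); rewrite opprK sqrrN addrC; apply; rewrite oppr_ge0.
pose h y := - (expR (y - y ^+ 2 / 2) + expR (- y - y ^+ 2 / 2)).
suff : h 0 <= h x.
  rewrite /h !(expr0n, oppr0, mul0r, subr0) expR0 lerNr opprK => le2.
  have shift y : expR y = expR (y - x ^+ 2 / 2) * expR (x ^+ 2 / 2).
    by rewrite -expRD subrK.
  by rewrite (shift x) (shift (- x)) -mulrDl ler_wpM2r ?expR_ge0.
apply: (@is_derive_ge0_le h
  (fun y => expR (- (y ^+ 2 / 2)) * ((1 + y) * expR (- y) - (1 - y) * expR y)) _ _ x x0) => [y|y y0].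
  have -> : h = - ((expR \o (id - cst 2^-1 * id ^+ 2)) + (expR \o (-%R - cst 2^-1 * id ^+ 2))).
    by apply/funext => z; rewrite /h /= !fctE /= !(mulrC 2^-1).
  by apply: is_derive_eq; rewrite /GRing.scale /= !fctE /= !(mulrC 2^-1) !expRD; field.
by rewrite mulr_ge0 ?expR_ge0 // subr_ge0 expR_mul1B_le_expRN_mul1D.
Qed.

Lemma invr_add_divr_sqr_le (D b c : R) : 0 <= b -> b <= c -> 0 < D - c ->
  D^-1 + b / D ^+ 2 <= (D - c)^-1.
Proof.
move=> b0 bc Dc; have D0 : 0 < D by lra.
rewrite -subr_ge0.
have -> : (D - c)^-1 - (D^-1 + b / D ^+ 2) = (D * (c - b) + b * c) / (D ^+ 2 * (D - c)).
  by field; rewrite !gt_eqF.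
apply: divr_ge0; first by apply: addr_ge0; apply: mulr_ge0; lra.
by apply: mulr_ge0; [exact: sqr_ge0 | exact: ltW].
Qed.

Lemma subr_mul_expR_div_le (D b c : R) : 0 < D -> b <= c -> (D - c) * expR (b / D) <= D.
Proof.
move=> D0 bc.
have tangent : D - c <= D * expR (- (b / D)).
  apply: le_trans (_ : D * (1 - b / D) <= _); last exact/ler_wpM2l/expR_ge1Dx/ltW.
  by rewrite mulrBr mulr1 mulrCA mulfV ?gt_eqF // mulr1 lerB.
apply: le_trans (ler_wpM2r (expR_ge0 _) tangent) _.
by rewrite expRN mulfVK ?gt_eqF ?expR_gt0.
Qed.

Lemma expR_sqr_shift_avg_le (D c G x : R) : 2 * G ^+ 2 <= c -> 0 < D - c ->
  (expR ((x + G) ^+ 2 / D) + expR ((x - G) ^+ 2 / D)) / 2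
    <= expR (G ^+ 2 / D) * expR (x ^+ 2 / (D - c)).
Proof.
move=> Gc Dc; have D0 : 0 < D by have := sqr_ge0 G; lra.
set E := expR ((x ^+ 2 + G ^+ 2) / D); set y := 2 * x * G / D.
have -> : expR ((x + G) ^+ 2 / D) = E * expR y.
  by rewrite /E /y -expRD; congr expR; field; rewrite gt_eqF.
have -> : expR ((x - G) ^+ 2 / D) = E * expR (- y).
  by rewrite /E /y -expRD; congr expR; field; rewrite gt_eqF.
apply: (@le_trans _ _ (E * expR (y ^+ 2 / 2))).
  rewrite -mulrDr -mulrA ler_wpM2l ?expR_ge0 // ler_pdivrMr // mulrC.
  exact: cosh_le_expR_sqr_half.
rewrite /E -!expRD ler_expR.
have -> : (x ^+ 2 + G ^+ 2) / D + y ^+ 2 / 2 = G ^+ 2 / D + x ^+ 2 * (D^-1 + 2 * G ^+ 2 / D ^+ 2).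
  by rewrite /y; field; rewrite gt_eqF.
rewrite lerD2l ler_wpM2l ?sqr_ge0 // invr_add_divr_sqr_le //.
by rewrite mulr_ge0 ?sqr_ge0.
Qed.

(* [A] and [c] stand for 2aT and pi G^2; [s] counts the rounds after the current one. *)
Definition potential (eps A c s x : R) : R :=
  eps * expR (x ^+ 2 / (A - c * s)) / Num.sqrt (1 - c * s / A).

Lemma potential_s0 (eps A c x : R) : potential eps A c 0 x = eps * expR (x ^+ 2 / A).
Proof. by rewrite /potential !mulr0 subr0 mul0r subr0 sqrtr1 divr1. Qed.

Lemma potential_x0 (eps A c s : R) : potential eps A c s 0 = eps / Num.sqrt (1 - c * s / A).
Proof. by rewrite /potential expr0n mul0r expR0 mulr1. Qed.

Lemma potential_step (eps A c G s x : R) : 0 <= eps -> 0 < A -> 2 * G ^+ 2 <= c ->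
  0 < A - c * (s + 1) ->
  (potential eps A c s (x + G) + potential eps A c s (x - G)) / 2
    <= potential eps A c (s + 1) x.
Proof.
move=> eps0 A0 Gc Dc.
set D := A - c * s.
have Dsucc : A - c * (s + 1) = D - c by rewrite /D; ring.
rewrite Dsucc in Dc.
have c0 : 0 <= c by have := sqr_ge0 G; lra.
have D0 : 0 < D by rewrite /D; lra.
have sqrt_ratio s' : 1 - c * s' / A = (A - c * s') / A by field; rewrite gt_eqF.
rewrite /potential !sqrt_ratio -/D Dsucc.
set sq := Num.sqrt (D / A); set sq' := Num.sqrt ((D - c) / A).
have sq0 : 0 < sq by rewrite sqrtr_gt0 divr_gt0.
have sq'0 : 0 < sq' by rewrite sqrtr_gt0 divr_gt0.
have scale : expR (G ^+ 2 / D) / sq <= sq'^-1.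
  rewrite ler_pdivrMr // ler_pdivlMl // -[expR _]ger0_norm ?expR_ge0 //.
  have ratio_ge0 d : 0 < d -> 0 <= d / A by move=> d0; rewrite divr_ge0 // ltW.
  rewrite -sqrtr_sqr -sqrtrM ?ratio_ge0 // ler_sqrt ?ratio_ge0 //.
  rewrite -expRM_natl mulrAC ler_pM2r ?invr_gt0 // mulrA.
  exact: subr_mul_expR_div_le.
apply: (@le_trans _ _ (eps / sq * (expR (G ^+ 2 / D) * expR (x ^+ 2 / (D - c))))).
  have -> : (eps * expR ((x + G) ^+ 2 / D) / sq + eps * expR ((x - G) ^+ 2 / D) / sq) / 2
      = eps / sq * ((expR ((x + G) ^+ 2 / D) + expR ((x - G) ^+ 2 / D)) / 2).
    by field; rewrite gt_eqF.
  by rewrite ler_wpM2l ?divr_ge0 ?(ltW sq0) // expR_sqr_shift_avg_le.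
have -> : eps / sq * (expR (G ^+ 2 / D) * expR (x ^+ 2 / (D - c)))
    = eps * expR (x ^+ 2 / (D - c)) * (expR (G ^+ 2 / D) / sq).
  by field; rewrite gt_eqF.
by rewrite ler_wpM2l ?mulr_ge0 ?expR_ge0.
Qed.

Lemma potential_linearized_le (eps A c G s x z be : R) :
  0 <= eps -> 0 < A - c * s -> 0 < G -> - G <= be <= G ->
  z ^+ 2 <= x ^+ 2 - 2 * x * be + G ^+ 2 ->
  potential eps A c s z
    + (potential eps A c s (x + G) - potential eps A c s (x - G)) / (2 * G) * be
  <= (potential eps A c s (x + G) + potential eps A c s (x - G)) / 2.
Proof.
move=> eps0 D0 G0 /andP[beG Gbe] zle.
set D := A - c * s; set k := eps / Num.sqrt (1 - c * s / A).
have k0 : 0 <= k by rewrite divr_ge0 ?sqrtr_ge0.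
have Pk y : potential eps A c s y = k * expR (y ^+ 2 / D) by rewrite /potential mulrAC.
rewrite !Pk; set e1 := expR ((x + G) ^+ 2 / D); set e2 := expR ((x - G) ^+ 2 / D).
set l := (G - be) / (2 * G).
have l0 : 0 <= l by rewrite divr_ge0 ?subr_ge0 ?mulr_ge0 // ltW.
have l1 : l <= 1 by rewrite ler_pdivrMr ?mulr_gt0 //; lra.
have convex : expR ((x ^+ 2 - 2 * x * be + G ^+ 2) / D) <= l * e1 + (1 - l) * e2.
  have -> : (x ^+ 2 - 2 * x * be + G ^+ 2) / D
      = l * ((x + G) ^+ 2 / D) + (1 - l) * ((x - G) ^+ 2 / D).
    by rewrite /l; field; rewrite !gt_eqF.
  exact: convex_expR_comb.
have -> : (k * e1 + k * e2) / 2 = k * (l * e1 + (1 - l) * e2) + (k * e1 - k * e2) / (2 * G) * be.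
  by rewrite /l; field; rewrite gt_eqF.
rewrite lerD2r ler_wpM2l // (le_trans _ convex) // ler_expR ler_pM2r ?invr_gt0 //.
Qed.

Lemma linear_sub_expR_sqr_le (eps b U x : R) : 0 < eps -> 0 < b -> 0 <= U -> 0 <= x ->
  U * x - eps * expR (x ^+ 2 / (2 * b))
    <= U * Num.sqrt (2 * b * ln (Num.sqrt b * U / eps + 1)) - eps.
Proof.
move=> eps0 b0 U0 x0.
set r := Num.sqrt b; have r0 : 0 < r by rewrite sqrtr_gt0.
have rr : r ^+ 2 = b by rewrite sqr_sqrtr // ltW.
set K := r * U / eps + 1.
have K1 : 1 <= K by rewrite lerDr divr_ge0 ?mulr_ge0 // ltW.
(* [m] solves [eps * expR (m ^+ 2 / (2 * b)) = eps + r * U]. *)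
set m := Num.sqrt (2 * b * ln K).
have m0 : 0 <= m by exact: sqrtr_ge0.
have expR_m : expR (m ^+ 2 / (2 * b)) = K.
  rewrite sqr_sqrtr; last by rewrite mulr_ge0 ?ln_ge0 // mulr_ge0 // ltW.
  rewrite [_ * ln _]mulrC mulfK ?gt_eqF ?mulr_gt0 // lnK //.
  by rewrite posrE (lt_le_trans _ K1).
have [xm|mx] := leP x m.
  have : 1 <= expR (x ^+ 2 / (2 * b)).
    by apply: le_trans (expR_ge1Dx _); rewrite lerDl divr_ge0 ?sqr_ge0 // mulr_ge0 // ltW.
  have : U * x <= U * m by exact: ler_wpM2l.
  nra.
set d := x - m; set y := (x ^+ 2 - m ^+ 2) / (2 * b).
have growth : (r * U + eps) * (1 + y) <= eps * expR (x ^+ 2 / (2 * b)).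
  have -> : expR (x ^+ 2 / (2 * b)) = K * expR y.
    by rewrite -expR_m -expRD /y; congr expR; field; rewrite gt_eqF.
  have -> : r * U + eps = eps * K by rewrite /K; field; rewrite gt_eqF.
  rewrite -mulrA; apply: ler_wpM2l; first exact: ltW.
  by apply: ler_wpM2l; [exact: le_trans K1 | exact: expR_ge1Dx].
have yd : d ^+ 2 / (2 * r ^+ 2) <= y.
  rewrite /y rr ler_pM2r ?invr_gt0 ?mulr_gt0 //.
  have -> : x ^+ 2 - m ^+ 2 = d * (d + 2 * m) by rewrite /d; ring.
  by rewrite expr2 ler_wpM2l ?subr_ge0 ?(ltW mx) // lerDl mulr_ge0.
have amgm : d <= r + r * (d ^+ 2 / (2 * r ^+ 2)).
  rewrite -subr_ge0 (_ : _ - d = ((d - r) ^+ 2 + r ^+ 2) / (2 * r)); last first.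
    by field; rewrite gt_eqF.
  by rewrite divr_ge0 ?addr_ge0 ?sqr_ge0 // mulr_ge0 // ltW.
have := ler_wpM2l U0 amgm.
have : r * U * (d ^+ 2 / (2 * r ^+ 2)) <= r * U * y by rewrite ler_wpM2l ?mulr_ge0 // ltW.
have : 0 <= eps * y.
  by rewrite mulr_ge0 ?(ltW eps0) // (le_trans _ yd) // divr_ge0 ?sqr_ge0 // mulr_ge0 ?sqr_ge0.
rewrite /d in growth *; nra.
Qed.

End RealInequalities.

Section InnerProduct.
Variables (R : realType) (V : lmodType R) (ip : V -> V -> R).
Hypothesis ip_inner : is_inner_product ip.

Let ipC x y : ip x y = ip y x. Proof. by case: ip_inner. Qed.
Let ip_ge0 x : 0 <= ip x x. Proof. by case: ip_inner. Qed.

Lemma ip_linear_l a x y z : ip (a *: x + y) z = a * ip x z + ip y z.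
Proof. by case: ip_inner. Qed.

Lemma ip0l z : ip 0 z = 0.
Proof. by have := ip_linear_l 1 0 0 z; rewrite scaler0 !addr0 mul1r; lra. Qed.

Lemma ipDl x y z : ip (x + y) z = ip x z + ip y z.
Proof. by rewrite -[x]scale1r ip_linear_l mul1r scale1r. Qed.

Lemma ipZl a x z : ip (a *: x) z = a * ip x z.
Proof. by rewrite -[a *: x]addr0 ip_linear_l ip0l addr0. Qed.

Lemma ipNl x z : ip (- x) z = - ip x z.
Proof. by rewrite -scaleN1r ipZl mulN1r. Qed.

Lemma ipDr x y z : ip z (x + y) = ip z x + ip z y.
Proof. by rewrite ipC ipDl !(ipC z). Qed.

Lemma ipZr a x z : ip z (a *: x) = a * ip z x.
Proof. by rewrite ipC ipZl ipC. Qed.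

Lemma ipNr x z : ip z (- x) = - ip z x.
Proof. by rewrite ipC ipNl ipC. Qed.

Lemma ipnorm_ge0 x : 0 <= ipnorm ip x. Proof. exact: sqrtr_ge0. Qed.

Lemma ipnorm_sqr x : ipnorm ip x ^+ 2 = ip x x. Proof. by rewrite sqr_sqrtr. Qed.

Lemma ipnorm0 : ipnorm ip 0 = 0. Proof. by rewrite /ipnorm ip0l sqrtr0. Qed.

Lemma ipnormZ a x : ipnorm ip (a *: x) = `|a| * ipnorm ip x.
Proof. by rewrite /ipnorm ipZl ipZr mulrA -expr2 sqrtrM ?sqr_ge0 // sqrtr_sqr. Qed.

Lemma ipnormB_sqr x y :
  ipnorm ip (x - y) ^+ 2 = ipnorm ip x ^+ 2 - 2 * ip y x + ipnorm ip y ^+ 2.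
Proof. by rewrite !ipnorm_sqr ipDl !ipDr ipNl !ipNr ipNl opprK (ipC x y); ring. Qed.

Lemma cauchy_schwarz x y : `|ip x y| <= ipnorm ip x * ipnorm ip y.
Proof.
rewrite -sqrtr_sqr -sqrtrM // ler_sqrt ?mulr_ge0 //.
have [xx0|xx_neq0] := eqVneq (ip x x) 0.
  have [_ _ _ /(_ x xx0) ->] := ip_inner.
  by rewrite !ip0l expr0n mul0r.
have xx_gt0 : 0 < ip x x by rewrite lt_def xx_neq0 ip_ge0.
have := ip_ge0 ((- (ip x y / ip x x)) *: x + y).
rewrite ip_linear_l !ipDr !ipZr (ipC y x).
have -> : - (ip x y / ip x x) * (- (ip x y / ip x x) * ip x x + ip x y)
    + (- (ip x y / ip x x) * ip x y + ip y y) = ip y y - ip x y ^+ 2 / ip x x.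
  by field; rewrite gt_eqF.
by rewrite subr_ge0 ler_pdivrMr // mulrC.
Qed.

Lemma scale_ipnorm_hat x : ipnorm ip x *: hat ip x = x.
Proof.
rewrite /hat; have [x0|x_neq0] := eqVneq (ipnorm ip x) 0.
  have [_ _ _ ip_eq0] := ip_inner.
  by rewrite scaler0 [RHS]ip_eq0 // -ipnorm_sqr x0 expr0n.
by rewrite scalerA mulfV ?scale1r.
Qed.

Lemma ipnorm_hat_le1 x : ipnorm ip (hat ip x) <= 1.
Proof.
rewrite /hat; have [x0|x_neq0] := eqVneq (ipnorm ip x) 0; first by rewrite ipnorm0.
by rewrite ipnormZ ger0_norm ?invr_ge0 ?ipnorm_ge0 // mulVf.
Qed.

Lemma potential_round (eps A c G s : R) (th g : V) :
  0 <= eps -> 0 < A -> 0 < G -> 2 * G ^+ 2 <= c -> 0 < A - c * (s + 1) ->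
  ipnorm ip g <= G ->
  potential eps A c s (ipnorm ip (th - g))
    + ip g (((potential eps A c s (ipnorm ip th + G)
              - potential eps A c s (ipnorm ip th - G)) / (2 * G)) *: hat ip th)
  <= potential eps A c (s + 1) (ipnorm ip th).
Proof.
move=> eps0 A0 G0 Gc Dc gG.
have D0 : 0 < A - c * s by have := sqr_ge0 G; nra.
set x := ipnorm ip th; set be := ip g (hat ip th).
have beG : `|be| <= G.
  apply: le_trans (cauchy_schwarz g (hat ip th)) _.
  by rewrite -[G]mulr1 ler_pM ?ipnorm_ge0 ?ipnorm_hat_le1.
have ip_g_th : ip g th = x * be by rewrite -{1}(scale_ipnorm_hat th) ipZr.
have dist : ipnorm ip (th - g) ^+ 2 <= x ^+ 2 - 2 * x * be + G ^+ 2.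
  rewrite ipnormB_sqr ip_g_th -mulrA lerD2l.
  by rewrite ler_pXn2r ?nnegrE ?ipnorm_ge0 ?(ltW G0).
rewrite ipZr -/be; apply: le_trans (potential_step x eps0 A0 Gc Dc).
by apply: potential_linearized_le; rewrite // -ler_norml.
Qed.

Lemma regretE T (g w : nat -> V) u :
  regret ip T g w u = \sum_(1 <= t < T.+1) ip (g t) (w t) + ip (theta g T) u.
Proof.
rewrite /regret /theta ipNl.
rewrite (big_morph (ip^~ u) (fun x y => ipDl x y u) (ip0l u)) -sumrB.
by apply: eq_bigr => t _; rewrite ipDr ipNr.
Qed.

End InnerProduct.

Lemma thetaS (R : realType) (V : lmodType R) (g : nat -> V) n :
  theta g n.+1 = theta g n - g n.+1.
Proof. by rewrite /theta big_nat_recr //= opprD. Qed.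

Section Strategy.
Variables (R : realType) (V : lmodType R) (ip : V -> V -> R).
Hypothesis ip_inner : is_inner_product ip.
Variables (T : nat) (G eps a : R) (g : nat -> V).
Hypotheses (T0 : (0 < T)%N) (G0 : 0 < G) (eps0 : 0 < eps) (piG_lt : pi * G ^+ 2 < 2 * a).
Hypothesis gG : forall t, (1 <= t <= T)%N -> ipnorm ip (g t) <= G.

Local Notation P := (potential eps (2 * a * T%:R) (pi * G ^+ 2)).

Lemma player_wE n : player_w ip T G a eps g n.+1 =
  ((P (T%:R - n%:R - 1) (ipnorm ip (theta g n) + G)
    - P (T%:R - n%:R - 1) (ipnorm ip (theta g n) - G)) / (2 * G)) *: hat ip (theta g n).
Proof. by rewrite /player_w /potential /=; congr (_ *: _); rewrite invfM; ring. Qed.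

Lemma gains_le_potential_drop n : (n <= T)%N ->
  \sum_(1 <= t < n.+1) ip (g t) (player_w ip T G a eps g t)
    <= P T%:R 0 - P (T%:R - n%:R) (ipnorm ip (theta g n)).
Proof.
elim: n => [_|n IH nT].
  by rewrite big_geq // /theta big_geq // !oppr0 addr0 ipnorm0 // subrr.
have piG_ge0 : 0 <= pi * G ^+ 2 by rewrite mulr_ge0 ?sqr_ge0 // pi_ge0.
have Tn : T%:R - n%:R - 1 + 1 = T%:R - n%:R :> R by rewrite subrK.
have remaining_pos : 0 < 2 * a * T%:R - pi * G ^+ 2 * (T%:R - n%:R - 1 + 1).
  have T_gt0 : 0 < T%:R :> R by rewrite ltr0n.
  have : pi * G ^+ 2 * (T%:R - n%:R) <= pi * G ^+ 2 * T%:R.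
    by rewrite ler_wpM2l // lerBlDr lerDl.
  have : pi * G ^+ 2 * T%:R < 2 * a * T%:R by rewrite ltr_pM2r.
  by rewrite Tn; lra.
have A0 : 0 < 2 * a * T%:R.
  by rewrite mulr_gt0 ?ltr0n //; move: piG_lt piG_ge0; lra.
have piG2 : 2 * G ^+ 2 <= pi * G ^+ 2 by rewrite ler_wpM2r ?sqr_ge0 ?pi_ge2.
have gn : ipnorm ip (g n.+1) <= G by exact: gG.
have round := potential_round ip_inner (theta g n) (ltW eps0) A0 G0 piG2 remaining_pos gn.
rewrite Tn -thetaS -player_wE in round.
have -> : T%:R - n.+1%:R = T%:R - n%:R - 1 :> R by rewrite -addn1 natrD opprD addrA.
rewrite big_nat_recr //=.
have := IH (ltnW nT); lra.
Qed.

End Strategy.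

Theorem theorem11 (R : realType) (V : lmodType R) (ip : V -> V -> R)
  (HV : is_hilbert ip) (T : nat) (G eps a : R)
  (hT : (1 <= T)%N) (hG : 0 < G) (heps : 0 < eps)
  (ha : G ^+ 2 * pi / 2 < a)
  (g : nat -> V)
  (hg : forall t : nat, (1 <= t <= T)%N -> ipnorm ip (g t) <= G)
  (u : V) :
  regret ip T g (player_w ip T G a eps g) u <=
    ipnorm ip u * Num.sqrt (2 * a * T%:R *
       ln (Num.sqrt (a * T%:R) * ipnorm ip u / eps + 1))
    + eps * ((Num.sqrt (1 - pi * G ^+ 2 / (2 * a)))^-1 - 1).
Proof.
have [ip_inner _] := HV.
have piG_lt : pi * G ^+ 2 < 2 * a by move: ha; rewrite ltr_pdivrMr // mulrC [a * _]mulrC.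
have a0 : 0 < a.
  have : 0 < pi * G ^+ 2 by rewrite mulr_gt0 ?exprn_gt0 ?pi_gt0.
  by move: piG_lt; lra.
have T0 : 0 < T%:R :> R by rewrite ltr0n.
have drop := gains_le_potential_drop ip_inner hT hG heps piG_lt hg (leqnn T).
rewrite subrr potential_s0 potential_x0 in drop.
rewrite (_ : pi * G ^+ 2 * T%:R / (2 * a * T%:R) = pi * G ^+ 2 / (2 * a)) in drop; last first.
  by field; rewrite !gt_eqF.
have conj := linear_sub_expR_sqr_le heps (mulr_gt0 a0 T0) (ipnorm_ge0 ip u)
  (ipnorm_ge0 ip (theta g T)).
have cs := le_trans (ler_norm _) (cauchy_schwarz ip_inner (theta g T) u).
rewrite !mulrA in conj; rewrite mulrC in cs.
rewrite regretE //; lra.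
Qed.
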